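(* For every $k\ge 1$, the bi-hypergraph obtained from $\mathcal H_{2k+1}$ by adding two new vertices $u$ and $v$, removing the edge $\{v_{1,1},v_{1,2},v_{1,3}\}$, and adding the edges $\{u,v_{1,1},v_{1,2}\}$, $\{v,v_{1,2},v_{1,3}\}$, and $\{u,v_{1,j},v_{2k+1,j}\}$ and $\{v,v_{1,j+1},v_{2k+1,j+1}\}$ for all $j\in[2]$, is minimal uncolorable.
   Context: A bi-hypergraph $\mathcal H=(V,E)$ consists of a finite vertex set $V$ and a set $E$ of subsets of $V$, called edges, with no edge contained in another. A mapping $f:V\to\mathbb N$ is a proper coloring of $\mathcal H$ if $1<|f(e)|<|e|$ for every $e\in E$, where $f(e)=\{f(x):x\in e\}$. $\mathcal H$ is colorable if it has a proper coloring, and uncolorable otherwise. A subhypergraph of $\mathcal H$ is a bi-hypergraph $(V',E')$ with $V'\subseteq V$, $E'\subseteq E$; $\mathcal H$ is minimal uncolorable if it is uncolorable but every proper subhypergraph of it is colorable. For $k\ge 2$, $\mathcal H_k$ is the $3$-uniform bi-hypergraph with vertex set $\{v_{i,j}: i\in[k], j\in[3]\}$ (all distinct), with the convention $v_{i,4}=v_{i,1}$, $v_{i,5}=v_{i,2}$, whose edges are the sets $\{v_{i,1},v_{i,2},v_{i,3}\}$ for all $i\in[k]$ and the sets $\{v_{q+1,j},v_{q,j},v_{q,j+t}\}$ for all $q\in[k-1]$, $j\in[3]$, $t\in\{1,2\}$. *)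

From mathcomp Require Import all_boot.
Set Implicit Arguments. Unset Strict Implicit. Unset Printing Implicit Defensive.

Section BiHypergraph.
Variable T : finType.

Definition bi_hypergraph (Vs : {set T}) (E : {set {set T}}) : Prop :=
  (forall e, e \in E -> e \subset Vs) /\
  (forall e1 e2, e1 \in E -> e2 \in E -> e1 \subset e2 -> e1 = e2).

Definition ncolors (f : T -> nat) (e : {set T}) : nat :=
  size (undup [seq f x | x <- enum e]).

Definition proper_coloring (E : {set {set T}}) (f : T -> nat) : Prop :=
  forall e, e \in E -> 1 < ncolors f e < #|e|.

(* colourings only matter on the vertex set, since edges lie inside it *)
Definition colorable (Vs : {set T}) (E : {set {set T}}) : Prop :=
  exists f : T -> nat, proper_coloring E f.

Definition subhypergraph (Vs' : {set T}) (E' : {set {set T}})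
    (Vs : {set T}) (E : {set {set T}}) : Prop :=
  bi_hypergraph Vs' E' /\ Vs' \subset Vs /\ E' \subset E.

Definition minimal_uncolorable (Vs : {set T}) (E : {set {set T}}) : Prop :=
  bi_hypergraph Vs E /\ ~ colorable Vs E /\
  (forall Vs' E', subhypergraph Vs' E' Vs E -> (Vs', E') <> (Vs, E) ->
     colorable Vs' E').
End BiHypergraph.

(* Ambient type for H_{m+1} plus two extra vertices:
   inl (i, j) stands for v_{i+1, j+1}; inr false = u, inr true = v. *)
Definition Vt (m : nat) : finType := ('I_m.+1 * 'I_3 + bool)%type.

(* v_{i,j} for 1 <= i <= m+1, j >= 1, with v_{i,4} = v_{i,1}, v_{i,5} = v_{i,2} *)
Definition vx (m i j : nat) : Vt m := inl (inord i.-1, inord (j.-1 %% 3)).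
Definition uu (m : nat) : Vt m := inr false.
Definition vv (m : nat) : Vt m := inr true.

Definition tri (m i : nat) : {set Vt m} := [set vx m i 1; vx m i 2; vx m i 3].

(* edges of H_n with n = m+1 *)
Definition H_edges (m : nat) : {set {set Vt m}} :=
  [set e | [exists i : 'I_m.+1, e == tri m i.+1] ||
           [exists q : 'I_m, exists j : 'I_3, exists t : 'I_2,
              e == [set vx m q.+2 j.+1; vx m q.+1 j.+1; vx m q.+1 (j.+1 + t.+1)]]].

Definition G_edges (m : nat) : {set {set Vt m}} :=
  (H_edges m :\ tri m 1)
  :|: [set [set uu m; vx m 1 1; vx m 1 2]; [set vv m; vx m 1 2; vx m 1 3]]
  :|: [set e | [exists j : 'I_2,
         (e == [set uu m; vx m 1 j.+1; vx m m.+1 j.+1]) ||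
         (e == [set vv m; vx m 1 j.+2; vx m m.+1 j.+2])]].

From mathcomp Require Import all_boot zify.
Set Implicit Arguments. Unset Strict Implicit. Unset Printing Implicit Defensive.

(* Every edge has three vertices, so a proper coloring is one that puts exactly
   two colors on every edge.  If two consecutive rows of the ladder H_n are both
   two-colored, the six edges between them force the upper row to be the lower
   one with its two colors exchanged; hence rows two apart coincide.  In G the
   first triangle is missing.  If row 1 is still two-colored then row 2k+1 equals
   row 1; otherwise row 1 is monochromatic, of color a say, and every later row
   avoids a.  In both cases the six edges through u and v cannot all be
   two-colored.
   Conversely, color the rows alternately with one pattern (x, y, y) and its
   color swap (y, x, x).  Deleting a rung lets the position of the odd vertex
   change between two consecutive rows, and deleting a triangle lets the rows
   after it move to a third color; either way the first and last rows become
   compatible with u and v.  Deleting an edge through u or v leaves five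
   constraints on the colors of u and v, which suitable choices satisfy. *)

Section TwoValued.
Variable T : eqType.
Implicit Types a b c : T.

Definition two_valued a b c : bool := size (undup [:: a; b; c]) == 2.

Lemma two_valuedP a b c : reflect
  ((a = b /\ b <> c) \/ (a = c /\ a <> b) \/ (b = c /\ a <> b))
  (two_valued a b c).
Proof.
rewrite /two_valued /= !inE.
case: (a =P b) => ab; case: (a =P c) => ac; case: (b =P c) => bc /=;
  rewrite ?inE ?ab ?ac ?eqxx /=; constructor; intuition congruence.
Qed.

(* All rungs between a row colored (x1, x2, x3) and the next one, colored (y1, y2, y3),
   are two-colored. *)
Definition linked (x1 x2 x3 y1 y2 y3 : T) : bool :=
  [&& two_valued y1 x1 x2, two_valued y1 x1 x3, two_valued y2 x2 x3,
      two_valued y2 x2 x1, two_valued y3 x3 x1 & two_valued y3 x3 x2].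

(* All edges through u and v are two-colored, where u and v get colors cu and cv and
   the first and last rows are colored (x1, x2, x3) and (z1, z2, z3). *)
Definition closing (cu cv x1 x2 x3 z1 z2 z3 : T) : bool :=
  [&& two_valued cu x1 x2, two_valued cv x2 x3, two_valued cu x1 z1,
      two_valued cu x2 z2, two_valued cv x2 z2 & two_valued cv x3 z3].

Ltac solve_two_valued :=
  unfold linked, closing in *;
  repeat match goal with
  | H : is_true (_ && _) |- _ => let H' := fresh H in case/andP: H => H' H
  | H : is_true (two_valued _ _ _) |- _ => move/two_valuedP: H => H
  | H : is_true (~~ two_valued _ _ _) |- _ => move/two_valuedP: H => H
  end;
  repeat match goal with
  | H : ?a <> ?a |- _ => exfalso; exact: H
  | H : ?a = ?b |- _ => first [subst a | subst b | clear H]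
  | H : _ /\ _ |- _ => destruct H
  | H : _ \/ _ |- _ => destruct H
  end; intuition congruence.

(* Two-colored linked rows differ by exchanging their two colors. *)
Lemma linked_twice x1 x2 x3 y1 y2 y3 z1 z2 z3 :
  two_valued x1 x2 x3 -> two_valued y1 y2 y3 -> two_valued z1 z2 z3 ->
  linked x1 x2 x3 y1 y2 y3 -> linked y1 y2 y3 z1 z2 z3 ->
  z1 = x1 /\ z2 = x2 /\ z3 = x3.
Proof. intros; solve_two_valued. Qed.

Lemma linked_not_two_valued x1 x2 x3 y1 y2 y3 :
  ~~ two_valued x1 x2 x3 -> two_valued y1 y2 y3 -> linked x1 x2 x3 y1 y2 y3 ->
  [/\ x2 = x1, x3 = x1 & y1 <> x1 /\ y2 <> x1 /\ y3 <> x1].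
Proof. intros; split; solve_two_valued. Qed.

Lemma linked_avoid a y1 y2 y3 z1 z2 z3 :
  two_valued y1 y2 y3 -> two_valued z1 z2 z3 -> linked y1 y2 y3 z1 z2 z3 ->
  y1 <> a /\ y2 <> a /\ y3 <> a -> z1 <> a /\ z2 <> a /\ z3 <> a.
Proof. intros; solve_two_valued. Qed.

Lemma closing_same_row cu cv x1 x2 x3 :
  two_valued x1 x2 x3 -> ~~ closing cu cv x1 x2 x3 x1 x2 x3.
Proof. intros; apply/negP => ?; solve_two_valued. Qed.

Lemma closing_monochromatic cu cv a z1 z2 z3 :
  two_valued z1 z2 z3 -> z1 <> a /\ z2 <> a /\ z3 <> a ->
  ~~ closing cu cv a a a z1 z2 z3.
Proof. intros; apply/negP => ?; solve_two_valued. Qed.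

End TwoValued.

Section Hypergraphs.
Variable T : finType.
Implicit Types (x y z : T) (Vs : {set T}) (E : {set {set T}}).

Lemma cards3 x y z : x != y -> x != z -> y != z -> #|[set x; y; z]| = 3.
Proof. by move=> xy xz yz; rewrite setUC cardsU1 cards2 !inE xy negb_or !(eq_sym z) xz yz. Qed.

Lemma ncolors_set3 (f : T -> nat) x y z :
  ncolors f [set x; y; z] = size (undup [:: f x; f y; f z]).
Proof.
rewrite /ncolors; apply/perm_size/uniq_perm; rewrite ?undup_uniq // => c.
rewrite !mem_undup; apply/mapP/idP => [[w]|].
  by rewrite mem_enum !inE -orbA => /or3P[]/eqP-> ->; rewrite ?inE eqxx ?orbT.
by rewrite !inE => /or3P[]/eqP->; [exists x|exists y|exists z];
  rewrite // mem_enum !inE eqxx ?orbT.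
Qed.

Lemma proper_set3E (f : T -> nat) x y z : #|[set x; y; z]| = 3 ->
  (1 < ncolors f [set x; y; z] < #|[set x; y; z]|) = two_valued (f x) (f y) (f z).
Proof.
move=> ->; rewrite ncolors_set3 /two_valued.
have := size_undup [:: f x; f y; f z]; case: (size (undup _)) => [|[|[|[|]]]] //.
Qed.

Lemma uniform_bi_hypergraph n Vs E :
  (forall e, e \in E -> e \subset Vs) -> (forall e, e \in E -> #|e| = n) ->
  bi_hypergraph Vs E.
Proof.
move=> sub_Vs card_n; split=> // e1 e2 e1E e2E sub12.
by apply/eqP; rewrite eqEcard sub12 !card_n ?leqnn.
Qed.

Lemma colorable_subset Vs Vs' E E' : E' \subset E -> colorable Vs E -> colorable Vs' E'.
Proof. by move=> sE [f f_proper]; exists f => e /(subsetP sE)/f_proper. Qed.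

(* Without the covering hypothesis, deleting an isolated vertex would give a proper
   subhypergraph with the same edges. *)
Lemma minimal_uncolorable_by_deletion Vs E : bi_hypergraph Vs E -> ~ colorable Vs E ->
  (forall x, x \in Vs -> exists2 e, e \in E & x \in e) ->
  (forall e, e \in E -> colorable Vs (E :\ e)) ->
  minimal_uncolorable Vs E.
Proof.
move=> hyp uncol cover del_col; split; [done | split=> // Vs' E' [[sub' _] [sVs sE]] neq].
have [EE'|] := eqVneq E' E.
  exfalso; apply: neq; congr pair => //; apply/eqP; rewrite eqEsubset sVs /=.
  apply/subsetP => x /cover[e eE xe].
  by apply: (subsetP (sub' e _)); rewrite ?EE'.
move=> neqE; have /subsetPn[e eE eE'] : ~~ (E \subset E').
  by apply: contra neqE => sEE'; rewrite eqEsubset sE.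
apply: colorable_subset (del_col e eE); apply/subsetP => e' e'E'.
by rewrite in_setD1 (subsetP sE) // andbT; apply: contraNneq eE' => <-.
Qed.

End Hypergraphs.

Section Edges.
Variable m : nat.

Definition rung (q j t : nat) : {set Vt m} :=
  [set vx m q.+2 j.+1; vx m q.+1 j.+1; vx m q.+1 (j.+1 + t.+1)].
Definition u_edge : {set Vt m} := [set uu m; vx m 1 1; vx m 1 2].
Definition v_edge : {set Vt m} := [set vv m; vx m 1 2; vx m 1 3].
Definition u_wrap (j : nat) : {set Vt m} := [set uu m; vx m 1 j.+1; vx m m.+1 j.+1].
Definition v_wrap (j : nat) : {set Vt m} := [set vv m; vx m 1 j.+2; vx m m.+1 j.+2].

Lemma vx_eq i i' j j' : 0 < i <= m.+1 -> 0 < i' <= m.+1 ->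
  (vx m i j == vx m i' j') = (i == i') && (j.-1 %% 3 == j'.-1 %% 3).
Proof.
move=> /andP[i_gt0 i_le] /andP[i'_gt0 i'_le]; rewrite /vx.
apply/eqP/andP => [[/(congr1 val)/= + /(congr1 val)/=]|[/eqP-> /eqP->]] //.
by rewrite !inordK ?ltn_pmod // => [/eqP + /eqP||]; lia.
Qed.

Lemma inl_vx (a : 'I_m.+1) (b : 'I_3) : inl (a, b) = vx m a.+1 b.+1.
Proof. by rewrite /vx /=; congr (inl (_, _)); apply: val_inj; rewrite /= inordK ?modn_small. Qed.

Lemma vx_notin_tri1 i j : 1 < i <= m.+1 -> vx m i j \notin tri m 1.
Proof. by move=> /andP[i_gt1 i_le]; rewrite !inE !vx_eq //; lia. Qed.

Lemma H_edge_in_G e : e \in H_edges m -> e != tri m 1 -> e \in G_edges m.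
Proof. by move=> eH e_neq; rewrite !in_setU in_setD1 e_neq eH. Qed.

Lemma tri_in_G i : 1 < i <= m.+1 -> tri m i \in G_edges m.
Proof.
move=> hi; apply: H_edge_in_G.
  have hi' : i.-1 < m.+1 by lia.
  by rewrite inE; apply/orP; left; apply/existsP; exists (Ordinal hi'); rewrite /= prednK //; lia.
by apply: contraNneq (vx_notin_tri1 1 hi) => <-; rewrite !inE eqxx.
Qed.

Lemma rung_in_G q j t : q < m -> j < 3 -> t < 2 -> rung q j t \in G_edges m.
Proof.
move=> hq hj ht; apply: H_edge_in_G.
  rewrite inE; apply/orP; right; apply/existsP; exists (Ordinal hq).
  by apply/existsP; exists (Ordinal hj); apply/existsP; exists (Ordinal ht).
have hq2 : 1 < q.+2 <= m.+1 by lia.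
by apply: contraNneq (vx_notin_tri1 j.+1 hq2) => <-; rewrite !inE eqxx.
Qed.

Lemma u_edge_in_G : u_edge \in G_edges m.
Proof. by rewrite !inE eqxx ?orbT. Qed.

Lemma v_edge_in_G : v_edge \in G_edges m.
Proof. by rewrite !inE eqxx ?orbT. Qed.

Lemma u_wrap_in_G j : j < 2 -> u_wrap j \in G_edges m.
Proof. by move=> hj; rewrite !inE; apply/orP; right; apply/existsP; exists (Ordinal hj); rewrite eqxx. Qed.

Lemma v_wrap_in_G j : j < 2 -> v_wrap j \in G_edges m.
Proof. by move=> hj; rewrite !inE; apply/orP; right; apply/existsP; exists (Ordinal hj); rewrite eqxx orbT. Qed.

Lemma G_edgesP e : e \in G_edges m ->
  [\/ (exists2 i, 1 < i <= m.+1 & e = tri m i),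
      (exists q j t, [/\ q < m, j < 3, t < 2 & e = rung q j t]),
      e = u_edge \/ e = v_edge
    | exists2 j, j < 2 & e = u_wrap j \/ e = v_wrap j].
Proof.
rewrite !in_setU in_setD1 => /orP[/orP[/andP[e_neq]|]|].
- rewrite inE => /orP[/existsP[i /eqP Ei]|/existsP[q /existsP[j /existsP[t /eqP ->]]]].
    apply: Or41; exists i.+1 => //; have := ltn_ord i; case: (posnP i) => [i0|]; last lia.
    by move: e_neq; rewrite Ei i0 eqxx.
  by apply: Or42; exists q, j, t.
- by rewrite !inE => /orP[]/eqP->; apply: Or43; auto.
- by rewrite inE => /existsP[j /orP[]/eqP->]; apply: Or44; exists j; auto.
Qed.

Lemma G_edge_card e : 0 < m -> e \in G_edges m -> #|e| = 3.
Proof.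
move=> m_gt0; case/G_edgesP => [[i hi ->]|[q [j [t [hq hj ht ->]]]]|[->|->]|[j hj [->|->]]];
  rewrite cards3 // ?vx_eq //; lia.
Qed.

Lemma G_edges_cover (x : Vt m) : exists2 e, e \in G_edges m & x \in e.
Proof.
case: x => [[a b]|[]]; last 2 first.
- by exists v_edge; rewrite ?v_edge_in_G // !inE eqxx.
- by exists u_edge; rewrite ?u_edge_in_G // !inE eqxx.
rewrite inl_vx; case: (posnP a) => [->|a_gt0].
  case: b => [[|[|[|]]] ?] //=.
  + by exists u_edge; rewrite ?u_edge_in_G // !inE eqxx ?orbT.
  + by exists u_edge; rewrite ?u_edge_in_G // !inE eqxx ?orbT.
  + by exists v_edge; rewrite ?v_edge_in_G // !inE eqxx ?orbT.
exists (tri m a.+1); first by apply: tri_in_G; have := ltn_ord a; lia.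
by rewrite !inE; case: b => [[|[|[|]]] ?] //=; rewrite eqxx ?orbT.
Qed.

End Edges.

Section Rigidity.
Variables (m : nat) (f : Vt m -> nat).
Hypotheses (m_gt0 : 0 < m) (f_proper : proper_coloring (G_edges m) f).
Local Notation c i j := (f (vx m i j)).

Lemma edge_two_valued x y z : [set x; y; z] \in G_edges m -> two_valued (f x) (f y) (f z).
Proof. by move=> eG; rewrite -proper_set3E; [apply: f_proper | exact: G_edge_card]. Qed.

Lemma row_two_valued i : 1 < i <= m.+1 -> two_valued (c i 1) (c i 2) (c i 3).
Proof. by move=> hi; apply/edge_two_valued/tri_in_G. Qed.

Lemma rows_linked q : q < m ->
  linked (c q.+1 1) (c q.+1 2) (c q.+1 3) (c q.+2 1) (c q.+2 2) (c q.+2 3).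
Proof.
move=> hq; have rung_tv j t : j < 3 -> t < 2 -> two_valued _ _ _ :=
  fun hj ht => edge_two_valued (rung_in_G hq hj ht).
by rewrite /linked (rung_tv 0 0) ?(rung_tv 0 1) ?(rung_tv 1 0) ?(rung_tv 1 1) ?(rung_tv 2 0) ?(rung_tv 2 1).
Qed.

Lemma uv_closing : closing (f (uu m)) (f (vv m))
  (c 1 1) (c 1 2) (c 1 3) (c m.+1 1) (c m.+1 2) (c m.+1 3).
Proof.
by rewrite /closing !edge_two_valued ?u_edge_in_G ?v_edge_in_G ?u_wrap_in_G ?v_wrap_in_G.
Qed.

Lemma rows_two_periodic l : two_valued (c 1 1) (c 1 2) (c 1 3) -> l.*2 <= m ->
  [/\ c l.*2.+1 1 = c 1 1, c l.*2.+1 2 = c 1 2 & c l.*2.+1 3 = c 1 3].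
Proof.
move=> tv1; elim: l => [|l IH] // hl; rewrite doubleS in hl *.
have [<- <- <-] := IH (ltnW (ltnW hl)).
have tvx : two_valued (c l.*2.+1 1) (c l.*2.+1 2) (c l.*2.+1 3).
  by have [-> -> ->] := IH (ltnW (ltnW hl)).
have tvy : two_valued (c l.*2.+2 1) (c l.*2.+2 2) (c l.*2.+2 3) by apply: row_two_valued; lia.
have tvz : two_valued (c l.*2.+3 1) (c l.*2.+3 2) (c l.*2.+3 3) by apply: row_two_valued; lia.
by have [-> [-> ->]] := linked_twice tvx tvy tvz (rows_linked (ltnW hl)) (rows_linked hl).
Qed.

Lemma first_row_monochromatic : ~~ two_valued (c 1 1) (c 1 2) (c 1 3) ->
  c 1 2 = c 1 1 /\ c 1 3 = c 1 1.
Proof.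
move=> ntv1; have tv2 : two_valued (c 2 1) (c 2 2) (c 2 3) by apply: row_two_valued; lia.
by have [-> -> _] := linked_not_two_valued ntv1 tv2 (rows_linked m_gt0).
Qed.

Lemma rows_avoid_first_color n : ~~ two_valued (c 1 1) (c 1 2) (c 1 3) -> n < m ->
  c n.+2 1 <> c 1 1 /\ c n.+2 2 <> c 1 1 /\ c n.+2 3 <> c 1 1.
Proof.
move=> ntv1; elim: n => [|n IH] hn.
  have tv2 : two_valued (c 2 1) (c 2 2) (c 2 3) by apply: row_two_valued; lia.
  by have [_ _] := linked_not_two_valued ntv1 tv2 (rows_linked m_gt0).
by apply: (linked_avoid _ _ (rows_linked hn) (IH (ltnW hn))); apply: row_two_valued; lia.
Qed.

End Rigidity.

Lemma G_uncolorable m : 0 < m -> ~~ odd m -> ~ colorable [set: Vt m] (G_edges m).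
Proof.
move=> m_gt0 m_even [f f_proper].
have closing_f := uv_closing m_gt0 f_proper.
have half_m : m./2.*2 = m by rewrite -[RHS]odd_double_half (negPf m_even).
have [tv1|ntv1] := boolP (two_valued (f (vx m 1 1)) (f (vx m 1 2)) (f (vx m 1 3))).
  have [] := rows_two_periodic m_gt0 f_proper tv1 (eq_leq half_m); rewrite half_m.
  by move=> e1 e2 e3; move: closing_f; rewrite e1 e2 e3; apply/negP/closing_same_row.
have [e2 e3] := first_row_monochromatic m_gt0 f_proper ntv1.
have tvm : two_valued (f (vx m m.+1 1)) (f (vx m m.+1 2)) (f (vx m m.+1 3)).
  by apply: row_two_valued => //; lia.
have hm : m.-1 < m by rewrite ltn_predL.
have := rows_avoid_first_color m_gt0 f_proper ntv1 hm; rewrite prednK // => avoid.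
by move: closing_f; rewrite e2 e3; apply/negP/closing_monochromatic.
Qed.

(* [R i j] is the color of v_{i, j+1}: rows are numbered from 1, positions from 0. *)
Definition row_coloring m (R : nat -> nat -> nat) (cu cv : nat) (x : Vt m) : nat :=
  match x with inl (i, j) => R i.+1 j | inr b => if b then cv else cu end.

Lemma row_coloring_vx m R cu cv i j : 0 < i <= m.+1 ->
  row_coloring R cu cv (vx m i j) = R i (j.-1 %% 3).
Proof. by move=> /andP[i_gt0 i_le]; rewrite /vx /= !inordK ?ltn_pmod ?prednK //; lia. Qed.

Section RowColorings.
Variable m : nat.
Hypothesis m_gt0 : 0 < m.
Implicit Types (R : nat -> nat -> nat) (e : {set Vt m}).

Lemma row_coloring_proper e R cu cv :
  (forall i, 1 < i <= m.+1 -> tri m i != e -> two_valued (R i 0) (R i 1) (R i 2)) ->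
  (forall q j t, q < m -> j < 3 -> t < 2 -> rung m q j t != e ->
     two_valued (R q.+2 j) (R q.+1 j) (R q.+1 ((j + t.+1) %% 3))) ->
  (u_edge m != e -> two_valued cu (R 1 0) (R 1 1)) ->
  (v_edge m != e -> two_valued cv (R 1 1) (R 1 2)) ->
  (forall j, j < 2 -> u_wrap m j != e -> two_valued cu (R 1 j) (R m.+1 j)) ->
  (forall j, j < 2 -> v_wrap m j != e -> two_valued cv (R 1 j.+1) (R m.+1 j.+1)) ->
  proper_coloring (G_edges m :\ e) (row_coloring R cu cv).
Proof.
move=> tri_tv rung_tv u_tv v_tv uw_tv vw_tv e'; rewrite in_setD1 => /andP[ne e'G].
have := G_edge_card m_gt0 e'G; move: ne.
case/G_edgesP: e'G => [[i hi ->]|[q [j [t [hq hj ht ->]]]]|[->|->]|[j hj [->|->]]] ne c3;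
  rewrite proper_set3E // !row_coloring_vx; try lia;
  first [by rewrite (modn_small hj); apply: rung_tv | rewrite /= ?modn_small; try lia; auto].
Qed.

Lemma row_coloring_proper_closing e R cu cv :
  (forall i, 1 < i <= m.+1 -> tri m i != e -> two_valued (R i 0) (R i 1) (R i 2)) ->
  (forall q j t, q < m -> j < 3 -> t < 2 -> rung m q j t != e ->
     two_valued (R q.+2 j) (R q.+1 j) (R q.+1 ((j + t.+1) %% 3))) ->
  closing cu cv (R 1 0) (R 1 1) (R 1 2) (R m.+1 0) (R m.+1 1) (R m.+1 2) ->
  proper_coloring (G_edges m :\ e) (row_coloring R cu cv).
Proof.
move=> tri_tv rung_tv /andP[u_tv /and5P[v_tv uw0 uw1 vw0 vw1]].
by apply: row_coloring_proper => // -[|[|]].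
Qed.

End RowColorings.

Definition stripe (p i j : nat) : nat := (j == p) (+) odd i.

(* The position other than the two positions j and (j + t.+1) %% 3 used by a rung in
   its lower row. *)
Definition third_pos (j t : nat) : nat := 3 - j - (j + t.+1) %% 3.

Lemma third_pos_lt j t : j < 3 -> t < 2 -> third_pos j t < 3.
Proof. by case: j => [|[|[|]]] //; case: t => [|[|]]. Qed.

Lemma third_pos_neq j t : j < 3 -> t < 2 -> third_pos j t != j.
Proof. by case: j => [|[|[|]]] //; case: t => [|[|]]. Qed.

Definition stripe_avoiding (b : bool) (i j : nat) : nat :=
  if (j == 0) (+) odd i then nat_of_bool (~~ b) else 2.

Lemma stripe_two_valued p i : p < 3 -> two_valued (stripe p i 0) (stripe p i 1) (stripe p i 2).
Proof. by rewrite /stripe; case: (odd i); case: p => [|[|[|]]]. Qed.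

Lemma stripe_rung p i j t : p < 3 -> j < 3 -> t < 2 ->
  two_valued (stripe p i.+1 j) (stripe p i j) (stripe p i ((j + t.+1) %% 3)).
Proof.
by rewrite /stripe /=; case: (odd i) => /=;
  case: p => [|[|[|]]] //; case: j => [|[|[|]]] //; case: t => [|[|]].
Qed.

Lemma stripe_rung_switch j0 t0 i j t : j0 < 3 -> t0 < 2 -> j < 3 -> t < 2 ->
  (j, t) != (j0, t0) ->
  two_valued (stripe j0 i.+1 j) (stripe (third_pos j0 t0) i j)
    (stripe (third_pos j0 t0) i ((j + t.+1) %% 3)).
Proof.
by rewrite /stripe /third_pos /=; case: (odd i) => /=;
  case: j0 => [|[|[|]]] //; case: t0 => [|[|]] //;
  case: j => [|[|[|]]] //; case: t => [|[|]].
Qed.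

Lemma stripe_odd p i j : odd i -> stripe p i j = stripe p 1 j.
Proof. by rewrite /stripe => ->. Qed.

Lemma stripe_closing p p' : p < 3 -> p' < 3 -> p != p' ->
  closing 0 0 (stripe p 1 0) (stripe p 1 1) (stripe p 1 2)
    (stripe p' 1 0) (stripe p' 1 1) (stripe p' 1 2).
Proof. by case: p => [|[|[|]]]; case: p' => [|[|[|]]]. Qed.

Lemma stripe_avoiding_two_valued b i :
  two_valued (stripe_avoiding b i 0) (stripe_avoiding b i 1) (stripe_avoiding b i 2).
Proof. by rewrite /stripe_avoiding; case: (odd i); case: b. Qed.

Lemma stripe_avoiding_rung b i j t : j < 3 -> t < 2 ->
  two_valued (stripe_avoiding b i.+1 j) (stripe_avoiding b i j)
    (stripe_avoiding b i ((j + t.+1) %% 3)).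
Proof.
by rewrite /stripe_avoiding /=; case: (odd i); case: b => /=;
  case: j => [|[|[|]]] //; case: t => [|[|]].
Qed.

Lemma stripe_rung_monochromatic i j t : j < 3 -> t < 2 ->
  two_valued (nat_of_bool (odd i.+1)) (stripe 0 i j) (stripe 0 i ((j + t.+1) %% 3)).
Proof. by rewrite /stripe /=; case: (odd i); case: j => [|[|[|]]] //; case: t => [|[|]]. Qed.

Lemma monochromatic_rung_stripe_avoiding i j : j < 3 ->
  two_valued (stripe_avoiding (odd i) i.+1 j) (odd i) (odd i : nat).
Proof. by rewrite /stripe_avoiding /=; case: (odd i); case: j => [|[|[|]]]. Qed.

Section EdgeDeletion.
Variable m : nat.
Hypotheses (m_gt0 : 0 < m) (m_even : ~~ odd m).
Local Notation colorable_without e := (colorable [set: Vt m] (G_edges m :\ e)).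

Lemma tri_deleted_colorable i0 : 1 < i0 <= m.+1 -> colorable_without (tri m i0).
Proof.
move=> /andP[i0_gt1 i0_le].
(* The rows after i0 avoid the color of the monochromatic row i0 by using color 2. *)
pose R l := if l < i0 then stripe 0 l
            else if l == i0 then fun=> nat_of_bool (odd i0) else stripe_avoiding (odd i0) l.
exists (row_coloring R 0 0); apply: row_coloring_proper_closing => //.
- move=> i _ ne; have {}ne : i != i0 by apply: contraNneq ne => ->.
  rewrite /R (negPf ne); case: ifP => _.
    exact: stripe_two_valued.
  exact: stripe_avoiding_two_valued.
- move=> q j t hq hj ht _; rewrite /R.
  case: (ltngtP q.+2 i0) => [lt_i0|gt_i0|<-]; last first.
  + exact: stripe_rung_monochromatic.
  + case: (eqVneq q.+1 i0) => [<-|_] /=.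
      exact: monochromatic_rung_stripe_avoiding.
    exact: stripe_avoiding_rung.
  + exact: stripe_rung.
- rewrite /R i0_gt1 ltnNge i0_le /=; case: eqVneq => [<-|_] /=.
    by rewrite (negPf m_even).
  by rewrite /stripe_avoiding /= (negPf m_even); case: (odd i0).
Qed.

Lemma rung_deleted_colorable q0 j0 t0 : q0 < m -> j0 < 3 -> t0 < 2 ->
  colorable_without (rung m q0 j0 t0).
Proof.
move=> hq0 hj0 ht0; have hp := third_pos_lt hj0 ht0.
pose R i := if i <= q0.+1 then stripe (third_pos j0 t0) i else stripe j0 i.
exists (row_coloring R 0 0); apply: row_coloring_proper_closing => //.
- by move=> i _ _; rewrite /R; case: ifP => _; apply: stripe_two_valued.
- move=> q j t hq hj ht ne; rewrite /R.
  case: (ltngtP q q0) => [lt_q0|gt_q0|eq_q0].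
  + by rewrite !ltnS lt_q0 ltnW //; apply: stripe_rung.
  + by rewrite !ltnS leqNgt ltnW // leqNgt gt_q0; apply: stripe_rung.
  + rewrite eq_q0 ltnn leqnn; apply: stripe_rung_switch => //.
    by apply: contraNneq ne => -[-> ->]; rewrite eq_q0.
- rewrite /R (ltnS m) (leqNgt m) hq0 /=.
  rewrite !(@stripe_odd j0 m.+1) /= ?(negPf m_even) //.
  by apply: stripe_closing; rewrite ?third_pos_neq.
Qed.

Lemma stripe_coloring_proper e p cu cv : p < 3 ->
  (u_edge m != e -> two_valued cu (stripe p 1 0) (stripe p 1 1)) ->
  (v_edge m != e -> two_valued cv (stripe p 1 1) (stripe p 1 2)) ->
  (forall j, j < 2 -> u_wrap m j != e -> two_valued cu (stripe p 1 j) (stripe p 1 j)) ->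
  (forall j, j < 2 -> v_wrap m j != e -> two_valued cv (stripe p 1 j.+1) (stripe p 1 j.+1)) ->
  proper_coloring (G_edges m :\ e) (row_coloring (stripe p) cu cv).
Proof.
move=> hp u_tv v_tv uw_tv vw_tv; have odd_m1 : odd m.+1 by rewrite /= m_even.
apply: row_coloring_proper => //.
- by move=> i _ _; apply: stripe_two_valued.
- by move=> q j t _ hj ht _; apply: stripe_rung.
- by move=> j hj ne; rewrite (stripe_odd _ _ odd_m1); apply: uw_tv.
- by move=> j hj ne; rewrite (stripe_odd _ _ odd_m1); apply: vw_tv.
Qed.

Lemma special_deleted_colorable e :
  (e = u_edge m \/ e = v_edge m) \/ (exists2 j, j < 2 & e = u_wrap m j \/ e = v_wrap m j) ->
  colorable_without e.
Proof.
(* All rows are the stripe p; (p, cu, cv) is chosen to fail on the deleted edge only. *)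
case=> [[->|->]|[[|[|//]] _ [->|->]]];
  [ exists (row_coloring (stripe 0) 2 0) | exists (row_coloring (stripe 2) 2 2)
  | exists (row_coloring (stripe 0) 0 0) | exists (row_coloring (stripe 2) 0 1)
  | exists (row_coloring (stripe 0) 1 0) | exists (row_coloring (stripe 2) 0 0) ];
  apply: stripe_coloring_proper => //;
  first [by rewrite eqxx | by case=> [|[|]] // _; rewrite eqxx | by case=> [|[|]]].
Qed.

Lemma G_edge_deleted_colorable e : e \in G_edges m -> colorable_without e.
Proof.
case/G_edgesP => [[i hi ->]|[q [j [t [hq hj ht ->]]]]|uv|wrap].
- exact: tri_deleted_colorable.
- exact: rung_deleted_colorable.
- by apply: special_deleted_colorable; left.
- by apply: special_deleted_colorable; right.
Qed.

End EdgeDeletion.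

Theorem mainTheorem20 (k : nat) : 1 <= k ->
  minimal_uncolorable [set: Vt k.*2] (G_edges k.*2).
Proof.
move=> k_ge1; have m_gt0 : 0 < k.*2 by rewrite double_gt0.
have m_even : ~~ odd k.*2 by rewrite odd_double.
apply: minimal_uncolorable_by_deletion.
- by apply: (@uniform_bi_hypergraph _ 3) => [e _|e]; [apply: subsetT | apply: G_edge_card].
- exact: G_uncolorable.
- by move=> x _; apply: G_edges_cover.
- exact: G_edge_deleted_colorable.
Qed.
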